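(* Let $N\ge 2$ be an integer, $h>0$, $\epsilon>0$ and $\Delta t>0$. Let $A$ be the $N\times N$ matrix discretizing the negative second derivative with homogeneous Neumann boundary conditions, i.e. for $V=(v_1,\dots,v_N)^T$, $$(AV)_i=\frac{2v_i-v_{i-1}-v_{i+1}}{h^2},\quad i=1,\dots,N,\qquad\text{with the convention } v_0=v_1,\ v_{N+1}=v_N .$$ Consider the sequence of vectors $U^k\in\mathbb{R}^N$ defined from $U^0$ by the linearized implicit Euler scheme (with zero boundary flux) $$U^{k+1}+\Delta t\, A U^{k+1}+\frac{\Delta t}{\epsilon^2}(U^k)^2U^{k+1}=U^k+\frac{\Delta t}{\epsilon^2}U^k,\qquad k\ge 0,$$ where $(U^k)^2U^{k+1}$ denotes the componentwise product $\big((u^k_i)^2u^{k+1}_i\big)_{i}$. If $\Delta t<\epsilon^2$ and $-1\le U^0\le 1$ componentwise, then $-1\le U^k\le 1$ componentwise for every $k\in\mathbb{N}$.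
   Context: This scheme is the time discretization of the semi-discrete (finite-difference in space) one-dimensional Allen–Cahn equation $u_t-u_{xx}+\frac{1}{\epsilon^2}u(u^2-1)=0$ on $]0,1[$ with Neumann boundary conditions $u_x(0,t)=\alpha(t)$, $u_x(1,t)=0$; the proposition concerns the case of zero control flux $\alpha=0$, in which the boundary source term of the scheme vanishes. Inequalities between vectors are understood componentwise. *)

From Stdlib Require Import Reals Lra Lia.
Open Scope R_scope.

(* Vectors of R^N are represented as functions nat -> R, meaningful on
   indices 1..N. *)

Definition ghost (N : nat) (v : nat -> R) (j : nat) : R :=
  if Nat.eqb j 0 then v 1%nat
  else if Nat.eqb j (S N) then v N
  else v j.

Definition neumannA (N : nat) (h : R) (v : nat -> R) (i : nat) : R :=
  (2 * ghost N v i - ghost N v (i - 1)%nat - ghost N v (i + 1)%nat) / (h ^ 2).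

Definition scheme_step (N : nat) (h eps dt : R) (uk uk1 : nat -> R) : Prop :=
  forall i : nat, (1 <= i <= N)%nat ->
    uk1 i + dt * neumannA N h uk1 i + dt / eps ^ 2 * (uk i ^ 2 * uk1 i)
    = uk i + dt / eps ^ 2 * uk i.

(* At an index m where U^{k+1} is maximal, the
   Neumann Laplacian satisfies (A U^{k+1})_m >= 0, so the scheme gives
   u_m (1 + d a^2) <= a (1 + d) with a = u^k_m and d = dt / eps^2.  Since
   1 + d a^2 - a (1 + d) = (1 - a) (1 - d a) >= 0 for |a| <= 1 and 0 <= d <= 1,
   this forces u_m <= 1.  The scheme is invariant under U |-> -U, which gives
   the lower bound. *)
From Stdlib Require Import Reals Lra Lia Psatz.
Open Scope R_scope.

Lemma exists_max_index (v : nat -> R) (n : nat) :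
  exists m, (1 <= m <= Nat.max n 1)%nat /\
    forall i, (1 <= i <= n)%nat -> v i <= v m.
Proof.
  induction n as [|n [m [Hm Hmax]]].
  - exists 1%nat; split; [lia | intros i Hi; lia].
  - destruct (Rle_dec (v (S n)) (v m)) as [Hle | Hgt].
    + exists m; split; [lia|].
      intros i Hi; destruct (Nat.eq_dec i (S n)) as [-> | Hne]; [exact Hle|].
      apply Hmax; lia.
    + exists (S n); split; [lia|].
      intros i Hi; destruct (Nat.eq_dec i (S n)) as [-> | Hne]; [lra|].
      specialize (Hmax i ltac:(lia)); lra.
Qed.

Lemma ghost_in_range (N : nat) (v : nat -> R) (j : nat) :
  (1 <= N)%nat -> (j <= S N)%nat ->
  exists i, (1 <= i <= N)%nat /\ ghost N v j = v i.
Proof.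
  intros HN Hj; unfold ghost.
  destruct (Nat.eqb_spec j 0); [exists 1%nat; split; [lia | reflexivity]|].
  destruct (Nat.eqb_spec j (S N)); [exists N; split; [lia | reflexivity]|].
  exists j; split; [lia | reflexivity].
Qed.

Lemma neumannA_ge0_at_max (N : nat) (h : R) (v : nat -> R) (m : nat) :
  0 < h -> (1 <= m <= N)%nat ->
  (forall i, (1 <= i <= N)%nat -> v i <= v m) -> 0 <= neumannA N h v m.
Proof.
  intros Hh Hm Hmax; unfold neumannA.
  assert (Hgm : ghost N v m = v m).
  { unfold ghost; destruct (Nat.eqb_spec m 0); [lia|].
    destruct (Nat.eqb_spec m (S N)); [lia | reflexivity]. }
  destruct (ghost_in_range N v (m - 1) ltac:(lia) ltac:(lia)) as [i [Hi ->]].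
  destruct (ghost_in_range N v (m + 1) ltac:(lia) ltac:(lia)) as [j [Hj ->]].
  rewrite Hgm.
  pose proof (Hmax i Hi); pose proof (Hmax j Hj).
  apply Rle_mult_inv_pos; [lra | apply pow_lt; exact Hh].
Qed.

Lemma neumannA_opp (N : nat) (h : R) (v : nat -> R) (i : nat) :
  neumannA N h (fun j => - v j) i = - neumannA N h v i.
Proof.
  unfold neumannA, ghost.
  destruct (Nat.eqb i 0), (Nat.eqb (i - 1) 0), (Nat.eqb (i + 1) 0),
    (Nat.eqb i (S N)), (Nat.eqb (i - 1) (S N)), (Nat.eqb (i + 1) (S N));
  unfold Rdiv; ring.
Qed.

Lemma scheme_step_opp (N : nat) (h eps dt : R) (uk uk1 : nat -> R) :
  scheme_step N h eps dt uk uk1 ->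
  scheme_step N h eps dt (fun i => - uk i) (fun i => - uk1 i).
Proof.
  intros Hs i Hi; rewrite neumannA_opp.
  specialize (Hs i Hi); lra.
Qed.

Lemma scheme_update_le1 (d a u x : R) :
  0 <= d <= 1 -> -1 <= a <= 1 -> 0 <= x ->
  u + x + d * (a ^ 2 * u) = a + d * a -> u <= 1.
Proof.
  intros Hd Ha Hx Heq.
  assert (Hfactor : 0 <= (1 - a) * (1 - d * a)) by (apply Rmult_le_pos; nra).
  assert (Hpos : 0 < 1 + d * a ^ 2) by nra.
  nra.
Qed.

Lemma scheme_step_le1 (N : nat) (h eps dt : R) (uk uk1 : nat -> R) :
  0 < h -> 0 < eps -> 0 < dt -> dt <= eps ^ 2 ->
  scheme_step N h eps dt uk uk1 ->
  (forall i, (1 <= i <= N)%nat -> -1 <= uk i <= 1) ->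
  forall i, (1 <= i <= N)%nat -> uk1 i <= 1.
Proof.
  intros Hh He Hdt Hle Hs Hk i Hi.
  destruct (exists_max_index uk1 N) as [m [Hm Hmax]].
  assert (HmN : (1 <= m <= N)%nat) by lia.
  assert (Hd : 0 <= dt / eps ^ 2 <= 1).
  { assert (He2 : 0 < eps ^ 2) by (apply pow_lt; exact He).
    split; [apply Rle_mult_inv_pos; lra|].
    apply (Rmult_le_reg_r (eps ^ 2)); [exact He2|].
    unfold Rdiv; rewrite Rmult_assoc, Rinv_l, Rmult_1_r, Rmult_1_l; lra. }
  assert (HA : 0 <= dt * neumannA N h uk1 m).
  { apply Rmult_le_pos; [lra | exact (neumannA_ge0_at_max N h uk1 m Hh HmN Hmax)]. }
  pose proof (scheme_update_le1 _ _ _ _ Hd (Hk m HmN) HA (Hs m HmN)).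
  specialize (Hmax i Hi); lra.
Qed.

Lemma scheme_step_bounded (N : nat) (h eps dt : R) (uk uk1 : nat -> R) :
  0 < h -> 0 < eps -> 0 < dt -> dt <= eps ^ 2 ->
  scheme_step N h eps dt uk uk1 ->
  (forall i, (1 <= i <= N)%nat -> -1 <= uk i <= 1) ->
  forall i, (1 <= i <= N)%nat -> -1 <= uk1 i <= 1.
Proof.
  intros Hh He Hdt Hle Hs Hk i Hi; split.
  - assert (Hk' : forall j, (1 <= j <= N)%nat -> -1 <= - uk j <= 1).
    { intros j Hj; specialize (Hk j Hj); lra. }
    pose proof (scheme_step_le1 N h eps dt _ _ Hh He Hdt Hle
                  (scheme_step_opp N h eps dt uk uk1 Hs) Hk' i Hi).
    lra.
  - exact (scheme_step_le1 N h eps dt uk uk1 Hh He Hdt Hle Hs Hk i Hi).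
Qed.

Theorem mainTheorem1 (N : nat) (h eps dt : R) (U : nat -> nat -> R) :
  (2 <= N)%nat -> 0 < h -> 0 < eps -> 0 < dt ->
  (forall k : nat, scheme_step N h eps dt (U k) (U (S k))) ->
  dt < eps ^ 2 ->
  (forall i : nat, (1 <= i <= N)%nat -> -1 <= U 0%nat i <= 1) ->
  forall k i : nat, (1 <= i <= N)%nat -> -1 <= U k i <= 1.
Proof.
  intros _ Hh He Hdt Hstep Hlt H0 k.
  induction k as [|k IH]; [exact H0|].
  exact (scheme_step_bounded N h eps dt (U k) (U (S k)) Hh He Hdt
           (Rlt_le _ _ Hlt) (Hstep k) IH).
Qed.
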